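(* Let $G=(V,E)$ be an undirected graph (parallel edges allowed) with reactances $r_e>0$ and admittance matrix $\mathbf{A}$, let $\vec{\theta}\in\mathbb{R}^V$ and $\vec{p}=\mathbf{A}\vec{\theta}$. Let $H=(V_H,E_H)$ be a subgraph of $G$, $F\subseteq E_H$, $\mathbf{A}'$ the admittance matrix of $(V,E\setminus F)$, and $\vec{\theta}'\in\mathbb{R}^V$ with $\mathbf{A}'\vec{\theta}'=\vec{p}$. If $S$ is a subgraph of $G$ with node set $V_S\supseteq V_H$, then $\mathbf{A}_{\bar S|G}(\vec{\theta}-\vec{\theta}')=0$, where $\mathbf{A}_{\bar S|G}$ is the submatrix of $\mathbf{A}$ consisting of the rows indexed by $V\setminus V_S$ (and all columns).
   Context: Admittance matrix: for $u\neq v$, $a_{uv}=-\sum_e 1/r_e$ over edges $e$ joining $u,v$ ($0$ if none), $a_{uu}=-\sum_{w\neq u}a_{uw}$. *)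

From HB Require Import structures.
From mathcomp Require Import all_boot all_order all_algebra.
Set Implicit Arguments. Unset Strict Implicit. Unset Printing Implicit Defensive.
Import Order.TTheory GRing.Theory Num.Theory.
Local Open Scope ring_scope.

(* A multigraph on node set 'I_n: edges of a finite type E, each edge e
   joining the (unordered) endpoints src e and tgt e. Parallel edges allowed. *)

Definition joins (n : nat) (E : finType) (src tgt : E -> 'I_n) (e : E) (u v : 'I_n) : bool :=
  ((src e == u) && (tgt e == v)) || ((src e == v) && (tgt e == u)).

Definition offdiag (R : fieldType) (n : nat) (E : finType) (src tgt : E -> 'I_n)
  (r : E -> R) (D : {set E}) (u v : 'I_n) : R :=
  - \sum_(e in D | joins src tgt e u v) (r e)^-1.

Definition admittance (R : fieldType) (n : nat) (E : finType) (src tgt : E -> 'I_n)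
  (r : E -> R) (D : {set E}) : 'M[R]_n :=
  \matrix_(u, v)
    if u != v then offdiag src tgt r D u v
    else - \sum_(w | w != u) offdiag src tgt r D u w.

Definition is_subgraph (n : nat) (E : finType) (src tgt : E -> 'I_n)
  (VH : {set 'I_n}) (EH : {set E}) : Prop :=
  forall e, e \in EH -> (src e \in VH) && (tgt e \in VH).

From HB Require Import structures.
From mathcomp Require Import all_boot all_order all_algebra.
Import Order.TTheory GRing.Theory Num.Theory.
Local Open Scope ring_scope.

(* Row u of an admittance matrix only involves edges incident to u.  A node
   outside V_S lies outside V_H, so none of the removed edges F touches it:
   row u is the same in A and A', and (A (theta - theta')) u = p u - p u = 0. *)

Section Admittance.

Variables (R : fieldType) (n : nat) (E : finType) (src tgt : E -> 'I_n).
Variable r : E -> R.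

Definition incident (e : E) (u : 'I_n) : bool := (src e == u) || (tgt e == u).

Lemma joins_incident e u v : joins src tgt e u v -> incident e u.
Proof.
by rewrite /incident => /orP[] /andP[/eqP -> /eqP ->]; rewrite eqxx ?orbT.
Qed.

Lemma offdiag_eq_incident (D1 D2 : {set E}) u :
  (forall e, incident e u -> (e \in D1) = (e \in D2)) ->
  offdiag src tgt r D1 u =1 offdiag src tgt r D2 u.
Proof.
move=> D12 v; rewrite /offdiag; congr (- _); apply: eq_bigl => e.
case J: (joins src tgt e u v); last by rewrite !andbF.
by rewrite !andbT D12 //; apply: joins_incident J.
Qed.

Lemma row_admittance_eq_incident (D1 D2 : {set E}) u :
  (forall e, incident e u -> (e \in D1) = (e \in D2)) ->
  row u (admittance src tgt r D1) = row u (admittance src tgt r D2).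
Proof.
move=> /offdiag_eq_incident D12; apply/rowP => v; rewrite !mxE.
by case: ifP => _; last (congr (- _); apply: eq_bigr => w _).
Qed.

Lemma subgraph_not_incident (VH : {set 'I_n}) (EH : {set E}) e u :
  is_subgraph src tgt VH EH -> e \in EH -> u \notin VH -> ~~ incident e u.
Proof.
move=> sub eEH; case/andP: (sub e eEH) => sVH tVH.
by apply: contra => /orP[] /eqP <-.
Qed.

End Admittance.

Lemma mulmx_row_eq {R : pzRingType} {m n p} {A B : 'M[R]_(m, n)} {i} (x : 'M[R]_(n, p)) j :
  row i A = row i B -> (A *m x) i j = (B *m x) i j.
Proof.
by move=> /(congr1 (fun M => (M *m x) 0 j)); rewrite -!row_mul !mxE.
Qed.

Theorem lemma5p11 (R : realFieldType) (n : nat) (E : finType)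
  (src tgt : E -> 'I_n) (r : E -> R) (hr : forall e, 0 < r e)
  (theta : 'cV[R]_n) (p : 'cV[R]_n)
  (hp : p = admittance src tgt r [set: E] *m theta)
  (VH : {set 'I_n}) (EH : {set E}) (hH : is_subgraph src tgt VH EH)
  (F : {set E}) (hF : F \subset EH)
  (theta' : 'cV[R]_n)
  (htheta' : admittance src tgt r (~: F) *m theta' = p)
  (VS : {set 'I_n}) (ES : {set E}) (hS : is_subgraph src tgt VS ES)
  (hVS : VH \subset VS) :
  forall i : 'I_n, i \notin VS ->
    (admittance src tgt r [set: E] *m (theta - theta')) i 0 = 0.
Proof.
move=> i iNVS.
have iNVH : i \notin VH by apply: contra iNVS; apply: subsetP.
have rowE : row i (admittance src tgt r [set: E]) = row i (admittance src tgt r (~: F)).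
  apply: row_admittance_eq_incident => e inc; rewrite in_setT in_setC; symmetry.
  by apply: contraL inc => eF; apply: subgraph_not_incident hH (subsetP hF e eF) iNVH.
rewrite mulmxBr mxE [X in _ + X]mxE -hp (mulmx_row_eq theta' 0 rowE) htheta'.
exact: subrr.
Qed.
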